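(* Let $(X,G)$ be a minimal topological dynamical system, $K\ge 2$, and $(x_1,\dots,x_K)\in RP_K(X,G)$. Then for any $\epsilon>0$ and any nonempty open set $U\subset X$, there exist $h\in G$ and nonempty open sets $V_k\subset B^X_\epsilon(x_k)$, $k=1,\dots,K$, such that $hV_k\subset U$ for all $k=1,\dots,K$.
   Context: $G$ is an infinite countable discrete group; a tds $(X,G)$ is a compact metric space $(X,d)$ with a $G$-action by homeomorphisms; minimal means no proper nonempty closed invariant subset. $B^X_\epsilon(x)$ is the open $\epsilon$-ball. $RP_K(X,G)$ is the set of $(x_1,\dots,x_K)\in X^K$ such that for every $\epsilon>0$ there exist $x_k'\in X$ and $g\in G$ with $d(x_k,x_k')\le\epsilon$ for $1\le k\le K$ and $d(gx'_{k_1},gx'_{k_2})\le\epsilon$ for $1\le k_1\le k_2\le K$. *)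

From HB Require Import structures.
From mathcomp Require Import all_boot all_order all_algebra.
From mathcomp Require Import all_classical all_reals all_analysis.
Set Implicit Arguments. Unset Strict Implicit. Unset Printing Implicit Defensive.
Import Order.TTheory GRing.Theory Num.Theory.
Local Open Scope classical_set_scope.
Local Open Scope ring_scope.

Definition is_group (G : Type) (mul : G -> G -> G) (one : G) (inv : G -> G) : Prop :=
  (forall a b c, mul a (mul b c) = mul (mul a b) c) /\
  (forall a, mul one a = a) /\ (forall a, mul a one = a) /\
  (forall a, mul (inv a) a = one) /\ (forall a, mul a (inv a) = one).

Definition is_action_homeo (R : realType) (G : Type) (X : metricType R)
  (mul : G -> G -> G) (one : G) (act : G -> X -> X) : Prop :=
  (forall x, act one x = x) /\
  (forall g h x, act (mul g h) x = act g (act h x)) /\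
  (forall g, continuous (act g)) /\
  (forall g, bijective (act g)) /\
  (forall g (f : X -> X), cancel (act g) f -> cancel f (act g) -> continuous f).

Definition minimal_action (R : realType) (G : Type) (X : metricType R)
  (act : G -> X -> X) : Prop :=
  forall A : set X, closed A -> (forall g, act g @` A `<=` A) ->
    A = set0 \/ A = [set: X].

Definition RP (R : realType) (G : Type) (X : metricType R)
  (act : G -> X -> X) (K : nat) : set ('I_K -> X) :=
  [set xs | forall eps : R, 0 < eps ->
     exists (xs' : 'I_K -> X) (g : G),
       (forall k, mdist (xs k) (xs' k) <= eps) /\
       (forall k1 k2 : 'I_K, (k1 <= k2)%N ->
          mdist (act g (xs' k1)) (act g (xs' k2)) <= eps)].

From HB Require Import structures.
From mathcomp Require Import all_boot all_order all_algebra.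
From mathcomp Require Import all_classical all_reals all_analysis.
Import Order.TTheory GRing.Theory Num.Theory.
Local Open Scope classical_set_scope.
Local Open Scope ring_scope.

(* Since (x_1, ..., x_K) is regionally proximal, there are points x'_k
   arbitrarily close to the x_k and group elements g moving all of them close
   to a common point; by compactness these common points accumulate at some y.
   By minimality some g0 sends y into U, hence sends a whole ball around y
   into U. Taking h = g0 g and V_k a small neighbourhood of x'_k inside
   h^-1 U finishes the proof. *)

Set Implicit Arguments.
Unset Strict Implicit.
Unset Printing Implicit Defensive.

Section MinimalOrbits.
Variables (R : realType) (G : Type) (X : metricType R).
Variables (mul : G -> G -> G) (one : G) (act : G -> X -> X).
Hypotheses (act1 : forall x, act one x = x)
  (actM : forall g h x, act (mul g h) x = act g (act h x))
  (actC : forall g, continuous (act g)).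

Lemma open_preimage_act g (U : set X) : open U -> open (act g @^-1` U).
Proof. by move=> oU; apply: open_comp => // x _; exact: actC. Qed.

Lemma minimal_orbit_meets_open : minimal_action act ->
  forall U : set X, open U -> U !=set0 -> forall y, exists g, U (act g y).
Proof.
move=> hmin U oU [u Uu] y.
pose A := [set x | forall g, ~ U (act g x)].
have closedA : closed A.
  have -> : A = \bigcap_(g in setT) ~` (act g @^-1` U).
    by apply/seteqP; split => x /= Ax g; [move=> _; exact: Ax | exact: Ax].
  by apply: closed_bigI => g _; apply/open_closedC/open_preimage_act.
have invA g : act g @` A `<=` A by move=> _ [x Ax <-] g'; rewrite -actM.
apply: contrapT => y_misses_U.
case: (hmin A closedA invA) => [A0 | AT].
- have : A y by move=> g Ugy; apply: y_misses_U; exists g.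
  by rewrite A0.
- have : A u by rewrite AT.
  by move/(_ one); rewrite act1.
Qed.

End MinimalOrbits.

Lemma RP_translates_cluster (R : realType) (G : Type) (X : metricType R)
    (act : G -> X -> X) (K : nat) (xs : 'I_K -> X) :
  (0 < K)%N -> compact [set: X] -> RP act xs ->
  exists y, forall d r, 0 < d -> 0 < r ->
    exists (xs' : 'I_K -> X) (g : G),
      forall k, ball (xs k) d (xs' k) /\ ball y r (act g (xs' k)).
Proof.
move=> K0 hX hxs.
have /choice [f hf] : forall n : nat, exists p : ('I_K -> X) * G,
    (forall k, mdist (xs k) (p.1 k) <= n.+1%:R^-1) /\
    (forall k1 k2 : 'I_K, (k1 <= k2)%N ->
       mdist (act p.2 (p.1 k1)) (act p.2 (p.1 k2)) <= n.+1%:R^-1).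
  move=> n; have [xs' [g ?]] := hxs n.+1%:R^-1 ltac:(by rewrite invr_gt0 ltr0Sn).
  by exists (xs', g).
pose k0 : 'I_K := Ordinal K0.
pose z n := act (f n).2 ((f n).1 k0).
have [y [_ cluster_y]] := hX (z @ \oo) _ filterT.
exists y => d r d0 r0.
have r20 : 0 < r / 2 by rewrite divr_gt0.
pose m := Num.min d (r / 2).
have m0 : 0 < m by rewrite lt_min d0 r20.
have z_eventually_close : (z @ \oo) [set z n | n in [set n | n.+1%:R^-1 < m]].
  by apply: filterS (near_infty_natSinv_lt (PosNum m0)) => n hn; exists n.
have [_ [[n hn <-] y_zn]] :=
  cluster_y _ (ball y (r / 2)) z_eventually_close (nbhsx_ballx _ _ r20).
move: hn; rewrite /= lt_min => /andP[hnd hnr].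
have [near_xs near_z] := hf n.
exists (f n).1, (f n).2 => k; split.
- by rewrite ballEmdist /=; exact: le_lt_trans (near_xs k) hnd.
- rewrite (splitr r); apply: ball_triangle y_zn _.
  by rewrite ballEmdist /=; exact: le_lt_trans (near_z k0 k (leq0n _)) hnr.
Qed.

Theorem lemma2p4 (R : realType) (G : countType)
  (mul : G -> G -> G) (one : G) (inv : G -> G)
  (X : metricType R) (act : G -> X -> X)
  (hG : is_group mul one inv) (hGinf : infinite_set [set: G])
  (hX : compact [set: X])
  (hact : is_action_homeo mul one act)
  (hmin : minimal_action act)
  (K : nat) (hK : (2 <= K)%N) (xs : 'I_K -> X) (hxs : RP act xs) :
  forall (eps : R), 0 < eps ->
  forall U : set X, open U -> U !=set0 ->
  exists (h : G) (V : 'I_K -> set X),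
    forall k : 'I_K,
      [/\ open (V k), V k !=set0, V k `<=` ball (xs k) eps
        & act h @` V k `<=` U].
Proof.
move=> eps eps0 U oU U0.
have [act1 [actM [actC _]]] := hact.
have [y near_y] := RP_translates_cluster (ltnW hK) hX hxs.
have [g0 U_g0y] := minimal_orbit_meets_open act1 actM actC hmin oU U0 y.
have /nbhs_ballP [r /= r0 ballU] : nbhs y (act g0 @^-1` U).
  by apply: open_nbhs_nbhs; split => //; exact: open_preimage_act.
have eps20 : 0 < eps / 2 by rewrite divr_gt0.
have [xs' [g hxs']] := near_y (eps / 2) r eps20 r0.
exists (mul g0 g), (fun k => (ball (xs' k) (eps / 2))° `&` act (mul g0 g) @^-1` U).
move=> k; have [xs_xs' y_gxs'] := hxs' k; split.
- by apply: openI; [exact: open_interior | exact: open_preimage_act].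
- exists (xs' k); split; first exact: nbhsx_ballx.
  by rewrite /= actM; exact: ballU.
- move=> v [/interior_subset xs'_v _].
  by rewrite (splitr eps); exact: ball_triangle xs_xs' xs'_v.
- by move=> _ [v [_ Uv] <-].
Qed.
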